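(* Let $d\ge1$ and let $\mathcal H\neq\{0\}$ be a Hilbert space which is continuously embedded in $\mathscr S'(\mathbb R^d)$, and such that for some constant $C_0\ge 1$, for every $f\in\mathcal H$ and $x,\xi\in\mathbb R^d$, $e^{i\langle\cdot,\xi\rangle}f(\cdot-x)\in\mathcal H$ and $\|e^{i\langle\cdot,\xi\rangle}f(\cdot-x)\|_{\mathcal H}\le C_0\|f\|_{\mathcal H}$. Let $\phi(x)=e^{-\frac12|x|^2}$. Then there is a constant $C>0$ such that $$|(f,\phi)|\le C\|f\|_{\mathcal H},\qquad f\in\mathcal H.$$
   Context: $\mathscr S'(\mathbb R^d)$ denotes the space of tempered distributions; $(f,\phi)$ denotes the (sesquilinear) extension of the $L^2(\mathbb R^d)$ scalar product to the pairing of $f\in\mathscr S'(\mathbb R^d)$ with $\phi\in\mathscr S(\mathbb R^d)$; $\langle\cdot,\cdot\rangle$ is the standard inner product on $\mathbb R^d$. *)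

From mathcomp Require Import all_boot all_order all_algebra.
From mathcomp Require Import all_classical all_reals all_analysis.
From mathcomp Require Export complex.
Set Implicit Arguments. Unset Strict Implicit. Unset Printing Implicit Defensive.
Import Order.TTheory GRing.Theory Num.Theory.
Local Open Scope ring_scope.

Section Defs.
Variable R : realType.
Variable d : nat.

Local Notation V := 'rV[R]_d.

Definition dotR (x y : V) : R := \sum_(j < d) x ord0 j * y ord0 j.
Definition sqnormR (x : V) : R := dotR x x.

Definition unitv (j : 'I_d) : V := delta_mx ord0 j.

Definition pderiv (j : 'I_d) (u : V -> R) : V -> R :=
  fun x => derive u x (unitv j).

Definition iterD (js : seq 'I_d) (u : V -> R) : V -> R :=
  foldr (fun j g => pderiv j g) u js.

Definition monom (alpha : 'I_d -> nat) (x : V) : R :=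
  \prod_(j < d) x ord0 j ^+ alpha j.

Definition schwartzR (u : V -> R) : Prop :=
  (forall (js : seq 'I_d) (j : 'I_d) (x : V), derivable (iterD js u) x (unitv j)) /\
  (forall (alpha : 'I_d -> nat) (js : seq 'I_d),
      exists M : R, forall x : V, `|monom alpha x * iterD js u x| <= M).

Definition schwartz (psi : V -> R[i]) : Prop :=
  schwartzR (fun x => complex.Re (psi x)) /\ schwartzR (fun x => complex.Im (psi x)).

Definition cabs (z : R[i]) : R :=
  Num.sqrt (complex.Re z ^+ 2 + complex.Im z ^+ 2).

Definition seminorms_le (N : nat) (M : R) (psi : V -> R[i]) : Prop :=
  forall (alpha : 'I_d -> nat) (js : seq 'I_d),
    (\sum_(j < d) alpha j <= N)%N -> (size js <= N)%N ->
    forall x : V,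
      `|monom alpha x * iterD js (fun y => complex.Re (psi y)) x| <= M /\
      `|monom alpha x * iterD js (fun y => complex.Im (psi y)) x| <= M.

(* a tempered distribution, acting through the sesquilinear pairing
   psi |-> (T, psi): conjugate-linear and continuous on S(R^d) *)
Definition tempered (T : (V -> R[i]) -> R[i]) : Prop :=
  (forall (a : R[i]) (psi1 psi2 : V -> R[i]), schwartz psi1 -> schwartz psi2 ->
      T (fun x => a * psi1 x + psi2 x) = conjc a * T psi1 + T psi2) /\
  (exists (N : nat) (K : R), forall (psi : V -> R[i]) (M : R),
      schwartz psi -> seminorms_le N M psi -> cabs (T psi) <= K * M).

Definition cexpi (theta : R) : R[i] := (cos theta +i* sin theta)%C.

(* adjoint of the time-frequency shift f |-> e^{i<.,xi>} f(. - x) acting on test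
   functions:  (e^{i<.,xi>} f(.-x), psi) = (f, tfs_adj x xi psi)  *)
Definition tfs_adj (x xi : V) (psi : V -> R[i]) : V -> R[i] :=
  fun s => cexpi (- dotR (s + x) xi) * psi (s + x).

Definition gauss (x : V) : R[i] := ((expR (- (sqnormR x / 2)))%:C)%C.

End Defs.

Section Hilbert.
Variable R : realType.
Variable H : lmodType R[i].

Definition inner_product (ip : H -> H -> R[i]) : Prop :=
  (forall (a : R[i]) (f g h : H), ip (a *: f + g) h = a * ip f h + ip g h) /\
  (forall f g : H, ip g f = conjc (ip f g)) /\
  (forall f : H, complex.Im (ip f f) = 0 /\ 0 <= complex.Re (ip f f)) /\
  (forall f : H, ip f f = 0 -> f = 0).

Definition hnorm (ip : H -> H -> R[i]) (f : H) : R := Num.sqrt (complex.Re (ip f f)).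

Definition hcomplete (ip : H -> H -> R[i]) : Prop :=
  forall u : nat -> H,
    (forall e : R, 0 < e -> exists N : nat, forall m n : nat, (N <= m)%N -> (N <= n)%N ->
        hnorm ip (u m - u n) < e) ->
    exists l : H, forall e : R, 0 < e -> exists N : nat, forall n : nat, (N <= n)%N ->
        hnorm ip (u n - l) < e.

Definition hilbert (ip : H -> H -> R[i]) : Prop := inner_product ip /\ hcomplete ip.

(* iota : H -> S'(R^d) is a continuous (for the weak-* topology of S') linear
   injection; iota f psi stands for the pairing (f, psi). *)
Definition cont_embedding (d : nat) (ip : H -> H -> R[i])
    (iota : H -> ('rV[R]_d -> R[i]) -> R[i]) : Prop :=
  (forall f : H, tempered (iota f)) /\
  (forall (a : R[i]) (f g : H) (psi : 'rV[R]_d -> R[i]), schwartz psi ->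
      iota (a *: f + g) psi = a * iota f psi + iota g psi) /\
  (forall f g : H, (forall psi, schwartz psi -> iota f psi = iota g psi) -> f = g) /\
  (forall psi : 'rV[R]_d -> R[i], schwartz psi ->
     forall (f : H) (e : R), 0 < e -> exists delta : R, 0 < delta /\
       forall g : H, hnorm ip (g - f) < delta -> cabs (iota g psi - iota f psi) < e).

End Hilbert.

From Pilot Require Import Defs.
From mathcomp Require Import all_boot all_order all_algebra.
From mathcomp Require Import all_classical all_reals all_analysis.
From mathcomp Require Import complex ring lra.
Set Implicit Arguments. Unset Strict Implicit. Unset Printing Implicit Defensive.
Import Order.TTheory GRing.Theory Num.Theory numFieldNormedType.Exports.
Local Open Scope classical_set_scope.
Local Open Scope ring_scope.

(* The Gaussian is a Schwartz function: every iterated derivative of p e^{-|x|^2/2},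
   p a polynomial, is again of that form, and e^{-|x|^2/2} beats any polynomial
   weight (1 + |x|^2)^n.  Continuity of the embedding at 0, tested on the Gaussian,
   bounds the linear functional f |-> (f, phi) by 1 on a ball of H, and homogeneity
   of the norm turns this into |(f, phi)| <= C |f|. *)

Section GaussianSchwartz.
Variables (R : realType) (d : nat).
Local Notation V := 'rV[R]_d.

Lemma is_derive_coord (x v : V) (k : 'I_d) :
  is_derive x v (fun y : V => y ord0 k) (v ord0 k).
Proof.
have quotE : \forall h \near (0 : R)^',
    h^-1 *: (((fun y : V => y ord0 k) \o shift x) (h *: v) - x ord0 k) = v ord0 k.
  near=> h.
  have h0 : h != 0 by near: h; exact: nbhs_dnbhs_neq.
  by rewrite /= !mxE addrK /GRing.scale /= mulKf.
split; first exact: is_cvg_near_cst quotE.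
by apply: lim_near_cst; [exact: Rhausdorff | exact: quotE].
Unshelve. all: by end_near.
Qed.

Lemma derive_line (f : V -> R) (x v : V) :
  'D_v f x = 'D_1 (fun h : R => f (h *: v + x)) 0.
Proof.
rewrite /derive scale0r add0r.
suff -> : (fun h : R => h^-1 *: ((f \o shift x) (h *: v) - f x)) =
    (fun h : R => h^-1 *: (((fun h => f (h *: v + x)) \o shift 0) (h *: 1) - f x)).
  by [].
by apply/funext => h /=; rewrite addr0 [_%:A]mulr1.
Qed.

Lemma is_derive_expR_comp (q : V -> R) (x v : V) (dq : R) :
  is_derive x v q dq -> is_derive x v (fun y => expR (q y)) (expR (q x) * dq).
Proof.
move=> [qv Dq].
have qline : is_derive (0 : R) 1 (fun h : R => q (h *: v + x)) dq.
  by split; [exact: (derivable1P q x v).1 qv | rewrite -derive_line].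
have expR_q0 : is_derive ((fun h : R => q (h *: v + x)) 0) 1 expR (expR (q x)).
  by rewrite /= scale0r add0r; exact: is_derive_expR.
have [expq_line Dexpq] := is_derive1_comp expR_q0 qline.
split; first exact: (derivable1P (fun y => expR (q y)) x v).2 expq_line.
by rewrite derive_line.
Qed.

Inductive polyfun : (V -> R) -> Prop :=
| polyfun_cst (c : R) : polyfun (cst c)
| polyfun_coord (k : 'I_d) : polyfun (fun x => x ord0 k)
| polyfunD (p q : V -> R) : polyfun p -> polyfun q -> polyfun (p + q)
| polyfunM (p q : V -> R) : polyfun p -> polyfun q -> polyfun (p * q).

Lemma polyfun_sum (I : Type) (r : seq I) (P : pred I) (F : I -> V -> R) :
  (forall i, P i -> polyfun (F i)) -> polyfun (\sum_(i <- r | P i) F i).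
Proof. by move=> PF; apply: big_ind => //; [exact: polyfun_cst 0 | exact: polyfunD]. Qed.

Lemma polyfun_prod (I : Type) (r : seq I) (P : pred I) (F : I -> V -> R) :
  (forall i, P i -> polyfun (F i)) -> polyfun (\prod_(i <- r | P i) F i).
Proof. by move=> PF; apply: big_ind => //; [exact: polyfun_cst 1 | exact: polyfunM]. Qed.

Lemma polyfunX (p : V -> R) (n : nat) : polyfun p -> polyfun (p ^+ n).
Proof.
move=> Pp; elim: n => [|n IHn]; first exact: polyfun_cst 1.
by rewrite exprS; exact: polyfunM.
Qed.

Lemma polyfun_monom (alpha : 'I_d -> nat) : polyfun (monom alpha).
Proof.
have -> : monom alpha = \prod_(j < d) (fun x : V => x ord0 j) ^+ alpha j.
  by rewrite fct_prodE; apply/funext => x; apply: eq_bigr => j _; rewrite exprfctE.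
by apply: polyfun_prod => j _; apply: polyfunX; exact: polyfun_coord.
Qed.

Lemma polyfun_sqnormR : polyfun (@sqnormR R d).
Proof.
have -> : @sqnormR R d = \sum_(j < d) (fun x : V => x ord0 j) * (fun x => x ord0 j).
  by rewrite fct_sumE.
by apply: polyfun_sum => j _; apply: polyfunM; exact: polyfun_coord.
Qed.

Lemma polyfun_derive (p : V -> R) (v : V) :
  polyfun p -> exists2 p' : V -> R, polyfun p' & forall x, is_derive x v p (p' x).
Proof.
elim=> [c|k|{}p q _ [p' Pp' Dp] _ [q' Pq' Dq]|{}p q Pp [p' Pp' Dp] Pq [q' Pq' Dq]].
- by exists (cst 0); [exact: polyfun_cst | move=> x; exact: is_derive_cst].
- by exists (cst (v ord0 k)); [exact: polyfun_cst | move=> x; exact: is_derive_coord].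
- by exists (p' + q'); [exact: polyfunD | move=> x; exact: is_deriveD].
- exists (p * q' + q * p'); first by apply: polyfunD; exact: polyfunM.
  by move=> x; exact: is_deriveM.
Qed.

Definition gaussR (x : V) : R := expR (- (sqnormR x / 2)).

Lemma is_derive_polyfun_gaussR (p : V -> R) (v : V) : polyfun p ->
  exists2 p' : V -> R, polyfun p' &
    forall x, is_derive x v (p * gaussR) (p' x * gaussR x).
Proof.
move=> Pp.
have Pexponent : polyfun (cst (- 2^-1) * @sqnormR R d).
  by apply: polyfunM; [exact: polyfun_cst | exact: polyfun_sqnormR].
have [q' Pq' Dq] := polyfun_derive v Pexponent.
have [p' Pp' Dp] := polyfun_derive v Pp.
exists (p * q' + p'); first by apply: polyfunD => //; exact: polyfunM.
move=> x; have Dgauss : is_derive x v gaussR (gaussR x * q' x).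
  have -> : gaussR = fun y => expR ((cst (- 2^-1) * @sqnormR R d) y).
    by apply/funext => y; rewrite /gaussR /= mulNr mulrC.
  exact: is_derive_expR_comp.
apply: is_derive_eq (is_deriveM (Dp x) Dgauss) _.
by rewrite /GRing.scale /= !fctE; ring.
Qed.

Lemma iterD_polyfun_gaussR (p : V -> R) (js : seq 'I_d) : polyfun p ->
  exists2 p' : V -> R, polyfun p' & Defs.iterD js (p * gaussR) = p' * gaussR.
Proof.
move=> Pp; elim: js => [|j js [p' Pp' IHjs]]; first by exists p.
have [p'' Pp'' Dp'] := is_derive_polyfun_gaussR (unitv R j) Pp'.
by exists p'' => //=; apply/funext => x; rewrite IHjs /pderiv derive_val.
Qed.

Lemma sqnormR_ge0 (x : V) : 0 <= sqnormR x.
Proof. by apply: sumr_ge0 => j _; rewrite -expr2 sqr_ge0. Qed.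

Lemma sqr_coord_le_sqnormR (x : V) (k : 'I_d) : x ord0 k ^+ 2 <= sqnormR x.
Proof.
rewrite /sqnormR /dotR (bigD1 k) //= expr2 lerDl.
by apply: sumr_ge0 => j _; rewrite -expr2 sqr_ge0.
Qed.

Lemma polyfun_bounded (p : V -> R) : polyfun p ->
  exists K n, 0 <= K /\ forall x, `|p x| <= K * (1 + sqnormR x) ^+ n.
Proof.
elim=> [c|k|{}p q _ [K1 [n1 [K1_ge0 Bp]]] _ [K2 [n2 [K2_ge0 Bq]]]|
        {}p q _ [K1 [n1 [K1_ge0 Bp]]] _ [K2 [n2 [K2_ge0 Bq]]]].
- by exists `|c|, 0%N; split => // x; rewrite expr0 mulr1.
- exists 1, 1%N; split => // x; rewrite expr1 mul1r.
  have := sqr_coord_le_sqnormR x k; rewrite -real_normK ?num_real //.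
  have := normr_ge0 (x ord0 k); nra.
- exists (K1 + K2), (maxn n1 n2); split; first exact: addr_ge0.
  move=> x; have y_ge1 : 1 <= 1 + sqnormR x by rewrite lerDl sqnormR_ge0.
  apply: (le_trans (ler_normD _ _)); rewrite mulrDl; apply: lerD.
    apply: le_trans (Bp x) _; apply: ler_wpM2l => //.
    by apply: ler_weXn2l; rewrite ?leq_maxl.
  apply: le_trans (Bq x) _; apply: ler_wpM2l => //.
  by apply: ler_weXn2l; rewrite ?leq_maxr.
- exists (K1 * K2), (n1 + n2)%N; split; first exact: mulr_ge0.
  by move=> x; rewrite normrM exprD mulrACA ler_pM.
Qed.

Lemma powD1_expRN_le (n : nat) (s : R) : 0 <= s ->
  (1 + s) ^+ n * expR (- (s / 2)) <= (2 * n.+1%:R) ^+ n.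
Proof.
move=> s_ge0; set m : R := n.+1%:R.
have m_ge1 : 1 <= m by rewrite ler1n.
have m2_gt0 : 0 < 2 * m by rewrite mulr_gt0 // (lt_le_trans ltr01).
have base : 1 + s <= 2 * m * expR (s / (2 * m)).
  apply: le_trans (ler_wpM2l (ltW m2_gt0) (expR_ge1Dx _)).
  by rewrite mulrDr mulr1 mulrCA divff ?gt_eqF // mulr1 lerD2r; lra.
have powered : (1 + s) ^+ n <= (2 * m) ^+ n * expR (s / 2).
  apply: le_trans (lerXn2r _ _ _ base) _; rewrite ?nnegrE ?addr_ge0 //.
    by rewrite mulr_ge0 ?expR_ge0 ?ltW.
  rewrite exprMn -expRM_natl; apply: ler_wpM2l; first by rewrite exprn_ge0 ?ltW.
  rewrite ler_expR mulrA ler_pdivrMr // mulrAC [X in _ <= X]mulrC.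
  have -> : 2^-1 * (s * (2 * m)) = m * s by field.
  by rewrite ler_wpM2r // ler_nat.
by rewrite expRN ler_pdivrMr ?expR_gt0.
Qed.

Lemma schwartzR_polyfun_gaussR (p : V -> R) : polyfun p -> schwartzR (p * gaussR).
Proof.
move=> Pp; split=> [js j x | alpha js].
  have [p' Pp' ->] := iterD_polyfun_gaussR js Pp.
  by have [p'' _ Dp'] := is_derive_polyfun_gaussR (unitv R j) Pp'; case: (Dp' x).
have [p' Pp' ->] := iterD_polyfun_gaussR js Pp.
have [K [n [K_ge0 Bp']]] := polyfun_bounded (polyfunM (polyfun_monom alpha) Pp').
exists (K * (2 * n.+1%:R) ^+ n) => x.
rewrite fctE mulrA normrM [`|gaussR x|]ger0_norm ?expR_ge0 //.
apply: le_trans (ler_wpM2r (expR_ge0 _) (Bp' x)) _.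
by rewrite -mulrA ler_wpM2l // powD1_expRN_le // sqnormR_ge0.
Qed.

Lemma schwartz_gauss : schwartz (@gauss R d).
Proof.
split.
  have -> : (fun x => complex.Re (gauss x)) = cst 1 * gaussR.
    by apply/funext => x; rewrite !fctE mul1r.
  exact/schwartzR_polyfun_gaussR/polyfun_cst.
have -> : (fun x => complex.Im (gauss x)) = cst 0 * gaussR.
  by apply/funext => x; rewrite !fctE mul0r.
exact/schwartzR_polyfun_gaussR/polyfun_cst.
Qed.

End GaussianSchwartz.

Lemma cabsZ (R : realType) (t : R) (z : R[i]) :
  0 <= t -> cabs (t%:C * z)%C = t * cabs z.
Proof.
move=> t_ge0; case: z => a b; rewrite /cabs /=.
have -> : (t * a - 0 * b) ^+ 2 + (t * b + 0 * a) ^+ 2 = t ^+ 2 * (a ^+ 2 + b ^+ 2) by ring.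
by rewrite sqrtrM ?sqr_ge0 // sqrtr_sqr ger0_norm.
Qed.

Section LinearFunctional.
Variables (R : realType) (H : lmodType R[i]) (L : H -> R[i]).
Hypothesis L_linear : forall (a : R[i]) (f g : H), L (a *: f + g) = a * L f + L g.

Lemma linear_map0 : L 0 = 0.
Proof.
apply: (@addrI _ (L 0)); rewrite addr0.
by have := L_linear 1 0 0; rewrite scaler0 addr0 mul1r.
Qed.

Lemma linear_mapZ (a : R[i]) (f : H) : L (a *: f) = a * L f.
Proof. by have := L_linear a f 0; rewrite addr0 linear_map0 addr0. Qed.

End LinearFunctional.

Section InnerProductNorm.
Variables (R : realType) (H : lmodType R[i]) (ip : H -> H -> R[i]).
Hypothesis ip_inner : inner_product ip.

Lemma hnorm_ge0 (f : H) : 0 <= hnorm ip f.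
Proof. exact: sqrtr_ge0. Qed.

Lemma hnormZ (t : R) (f : H) : 0 <= t -> hnorm ip (t%:C%C *: f) = t * hnorm ip f.
Proof.
have [ipL [ipC [ip_real _]]] := ip_inner.
have ipZ a g h : ip (a *: g) h = a * ip g h.
  by apply: (linear_mapZ (L := ip^~ h)) => b g1 g2; exact: ipL.
move=> t_ge0; rewrite /hnorm ipZ ipC ipZ.
have [Im_ff0 _] := ip_real f; move: Im_ff0; case: (ip f f) => a b /= ->.
have -> : t * (t * a - 0 * 0) - 0 * - (t * 0 + 0 * a) = t ^+ 2 * a by ring.
by rewrite sqrtrM ?sqr_ge0 // sqrtr_sqr ger0_norm.
Qed.

End InnerProductNorm.

Lemma le_of_scaled_lt (R : realType) (a b delta : R) : 0 <= a -> 0 < delta ->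
  (forall t, 0 < t -> t * a < delta -> t * b < 1) -> b <= 2 / delta * a.
Proof.
move=> + delta_gt0 scaled; rewrite le_eqVlt => /predU1P[a0|a_gt0].
  subst a; rewrite mulr0 leNgt; apply/negP => b_gt0.
  have := scaled (2 / b); rewrite divfK ?gt_eqF // mulr0 divr_gt0 //.
  by move=> /(_ isT delta_gt0); lra.
have t_gt0 : 0 < delta / (2 * a) by rewrite divr_gt0 ?mulr_gt0.
have a_neq0 : a != 0 by rewrite gt_eqF.
have delta_neq0 : delta != 0 by rewrite gt_eqF.
have tb_lt1 : delta / (2 * a) * b < 1.
  apply: scaled => //; rewrite (_ : delta / (2 * a) * a = delta / 2).
    by rewrite ltr_pdivrMr // ltr_pMr // ltr1n.
  by field.
rewrite -(ler_pM2l t_gt0) (_ : delta / (2 * a) * (2 / delta * a) = 1); first exact: ltW.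
by field; rewrite delta_neq0 a_neq0.
Qed.

Lemma bounded_of_bounded_on_ball (R : realType) (H : lmodType R[i])
    (N : H -> R) (L : H -> R[i]) (delta : R) :
  (forall f, 0 <= N f) -> (forall t f, 0 <= t -> N (t%:C%C *: f) = t * N f) ->
  (forall a f, L (a *: f) = a * L f) ->
  0 < delta -> (forall g, N g < delta -> cabs (L g) < 1) ->
  forall f, cabs (L f) <= 2 / delta * N f.
Proof.
move=> N_ge0 NZ LZ delta_gt0 ball f; apply: le_of_scaled_lt => // t t_gt0 tNf_lt.
by rewrite -cabsZ ?ltW // -LZ ball // NZ ?ltW.
Qed.

Theorem lemma2p1 (R : realType) (d : nat) (H : lmodType R[i])
  (ip : H -> H -> R[i]) (iota : H -> ('rV[R]_d -> R[i]) -> R[i]) (C0 : R) :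
  (0 < d)%N ->
  hilbert ip ->
  (exists f : H, f <> 0) ->
  cont_embedding ip iota ->
  1 <= C0 ->
  (forall (f : H) (x xi : 'rV[R]_d), exists g : H,
      (forall psi, schwartz psi -> iota g psi = iota f (tfs_adj x xi psi)) /\
      hnorm ip g <= C0 * hnorm ip f) ->
  exists C : R, 0 < C /\ forall f : H, cabs (iota f (@gauss R d)) <= C * hnorm ip f.
Proof.
move=> _ [ip_inner _] _ [_ [iota_linear [_ iota_cont]]] _ _.
have gauss_schwartz := schwartz_gauss R d.
have iota_gauss_linear a f g :
    iota (a *: f + g) (@gauss R d) = a * iota f (@gauss R d) + iota g (@gauss R d).
  exact: iota_linear.
have [delta [delta_gt0 ball]] := iota_cont _ gauss_schwartz 0 1 ltr01.
exists (2 / delta); split; first by rewrite divr_gt0.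
apply: (@bounded_of_bounded_on_ball _ _ (hnorm ip) (iota^~ (@gauss R d)) delta)
  => // [f|t f|a f|g].
- exact: hnorm_ge0.
- exact: hnormZ.
- exact: linear_mapZ iota_gauss_linear _ _.
- by have := ball g; rewrite subr0 (linear_map0 iota_gauss_linear) subr0.
Qed.
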